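(* Let $\mathit{VI}$ be a finite set of variables with $\#\mathit{VI}=n$ and let $k\in\mathbb{N}$ with $1\le k\le n$. Then $\mathit{TS}_k\subseteq\mathit{TSD}_k$. Furthermore, if $n>1$ then $\mathit{TS}_k\subsetneq\mathit{TSD}_k$.
   Context: $\mathit{SG}=\wp(\mathit{VI})\setminus\{\emptyset\}$ and $\mathit{SH}=\wp(\mathit{SG})$, ordered by set inclusion. For $S\in\mathit{SG}$, $\mathrm{tuples}_k(S)=\{T\subseteq S\mid \#T=k\}$, and for $sh\in\mathit{SH}$, $\mathrm{tuples}_k(sh)=\bigcup_{S'\in sh}\mathrm{tuples}_k(S')$. Define $\rho_{\mathit{TS}_k}(sh)=\{S\in\mathit{SG}\mid \mathrm{tuples}_k(S)\subseteq\mathrm{tuples}_k(sh)\}$ and $\mathit{TS}_k=\rho_{\mathit{TS}_k}(\mathit{SH})$. Define $\rho_{\mathit{TSD}_k}(sh)=\{\,S\in\mathit{SG}\mid \forall T\subseteq S:\ \#T<k\implies S=\bigcup\{U\in sh\mid T\subseteq U\subseteq S\}\,\}$ and $\mathit{TSD}_k=\rho_{\mathit{TSD}_k}(\mathit{SH})$. Both maps are upper closure operators on $\mathit{SH}$. *)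

From mathcomp Require Import all_boot.
Set Implicit Arguments. Unset Strict Implicit. Unset Printing Implicit Defensive.

(* Variables VI : a finType.  SG = nonempty subsets of VI (elements of {set VI}
   different from set0).  SH = sets of elements of SG, i.e. sh : {set {set VI}}
   with set0 \notin sh. *)

Section TupleSharing.
Variable VI : finType.

Definition SH : {set {set {set VI}}} := [set sh : {set {set VI}} | set0 \notin sh].

Definition tuples (k : nat) (S : {set VI}) : {set {set VI}} :=
  [set T in powerset S | #|T| == k].

Definition tuples_sh (k : nat) (sh : {set {set VI}}) : {set {set VI}} :=
  \bigcup_(S' in sh) tuples k S'.

Definition rho_TS (k : nat) (sh : {set {set VI}}) : {set {set VI}} :=
  [set S : {set VI} | (S != set0) && (tuples k S \subset tuples_sh k sh)].

Definition rho_TSD (k : nat) (sh : {set {set VI}}) : {set {set VI}} :=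
  [set S : {set VI} | (S != set0) &&
     [forall T : {set VI}, ((T \subset S) && (#|T| < k)) ==>
        (S == \bigcup_(U in sh | (T \subset U) && (U \subset S)) U)]].

Definition TS (k : nat) : {set {set {set VI}}} := [set rho_TS k sh | sh in SH].
Definition TSD (k : nat) : {set {set {set VI}}} := [set rho_TSD k sh | sh in SH].

End TupleSharing.

From mathcomp Require Import all_boot.

(* For k > 0, rho_TSD k is below rho_TS k (drop one point x of a k-tuple: the
   remaining (k-1)-tuple is covered by sharing groups inside S, and the one
   containing x contains the whole tuple), and both agree on the images of
   rho_TS k, so TS_k consists of fixed points of rho_TSD k.  Conversely every
   singleton sharing {S} is a fixed point of rho_TSD k, while images of rho_TS k
   are closed under nonempty subsets, so {VI} lies in TSD_k but not in TS_k as
   soon as #|VI| > 1. *)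

Section TupleSharingClosures.
Variables (VI : finType) (k : nat).
Implicit Types (S T U : {set VI}) (sh : {set {set VI}}).

Lemma set0_notin_rho_TS sh : set0 \notin rho_TS k sh.
Proof. by rewrite inE eqxx. Qed.

Lemma rho_TS_subset_closed sh S T :
  S \in rho_TS k sh -> T \subset S -> T != set0 -> T \in rho_TS k sh.
Proof.
rewrite !inE => /andP[_ tupS] sTS ->; apply: subset_trans tupS.
apply/subsetP => T'; rewrite !inE => /andP[sT'T ->].
by rewrite (subset_trans sT'T sTS).
Qed.

Lemma rho_TS_idem sh : rho_TS k (rho_TS k sh) = rho_TS k sh.
Proof.
apply/setP => S; rewrite !inE; case S0: (S != set0) => //=.
apply/idP/idP => tupS.
- apply/subsetP => T /(subsetP tupS) /bigcupP[U].
  by rewrite inE => /andP[_ /subsetP tupU] /tupU.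
- apply/subsetP => T tST; apply/bigcupP; exists S => //.
  by rewrite inE S0.
Qed.

Lemma rho_TSD_extensive sh : set0 \notin sh -> sh \subset rho_TSD k sh.
Proof.
move=> sh0; apply/subsetP => S shS; rewrite inE.
have -> : S != set0 by apply: contraNneq sh0 => <-.
apply/forallP => T; apply/implyP => /andP[sTS _].
rewrite eqEsubset; apply/andP; split.
- by apply: (bigcup_max S) => //; rewrite shS sTS subxx.
- by apply/bigcupsP => U /andP[_ /andP[_]].
Qed.

Lemma rho_TSD_set1 S : 0 < k -> S != set0 -> rho_TSD k [set S] = [set S].
Proof.
move=> k_gt0 S0; apply/eqP; rewrite eqEsubset andbC rho_TSD_extensive; last first.
  by rewrite inE eq_sym.
apply/subsetP => S'; rewrite inE => /andP[/set0Pn[x xS']].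
move=> /forallP/(_ set0); rewrite sub0set cards0 k_gt0 /= => /eqP defS'.
rewrite inE eqEsubset {1}defS'; apply/andP; split.
- by apply/bigcupsP => U /andP[]; rewrite inE => /eqP->.
- move: xS'; rewrite {1}defS' => /bigcupP[U /andP[]].
  by rewrite inE => /eqP-> /andP[].
Qed.

Section PositiveArity.
Hypothesis k_gt0 : 0 < k.

Lemma rho_TSD_sub_rho_TS sh : rho_TSD k sh \subset rho_TS k sh.
Proof.
apply/subsetP => S; rewrite !inE => /andP[-> /forallP coverS] /=.
apply/subsetP => T; rewrite inE powersetE => /andP[sTS /eqP cardT].
have [x xT] : exists x, x \in T.
  by apply/set0Pn; rewrite -card_gt0 cardT.
have smallT : (T :\ x \subset S) && (#|T :\ x| < k).
  by rewrite (subset_trans (subD1set T x) sTS) -cardT proper_card ?properD1.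
have /eqP defS := implyP (coverS (T :\ x)) smallT.
have := subsetP sTS x xT; rewrite defS => /bigcupP[U /andP[shU /andP[sTxU _]] xU].
apply/bigcupP; exists U => //; rewrite inE powersetE cardT eqxx andbT.
by rewrite -(setD1K xT) subUset sub1set xU.
Qed.

Lemma rho_TSD_rho_TS sh : rho_TSD k (rho_TS k sh) = rho_TS k sh.
Proof.
apply/eqP; rewrite eqEsubset rho_TSD_extensive ?set0_notin_rho_TS // andbT.
by rewrite -{2}rho_TS_idem rho_TSD_sub_rho_TS.
Qed.

Lemma TS_sub_TSD : TS VI k \subset TSD VI k.
Proof.
apply/subsetP => _ /imsetP[sh _ ->]; apply/imsetP.
by exists (rho_TS k sh); rewrite ?rho_TSD_rho_TS // inE set0_notin_rho_TS.
Qed.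

Lemma set1_in_TSD S : S != set0 -> [set S] \in TSD VI k.
Proof.
move=> S0; apply/imsetP; exists [set S]; last by rewrite rho_TSD_set1.
by rewrite !inE eq_sym.
Qed.

End PositiveArity.

Lemma set1_notin_TS S : 1 < #|S| -> [set S] \notin TS VI k.
Proof.
move=> S_gt1; apply/imsetP => -[sh _ defS].
have [x xS] : exists x, x \in S by apply/set0Pn; rewrite -card_gt0 ltnW.
have : [set x] \in rho_TS k sh.
  apply: (@rho_TS_subset_closed sh S); rewrite -?defS ?inE ?sub1set //.
  by apply/set0Pn; exists x; rewrite inE.
rewrite -defS inE => /eqP xS_eq.
by move: S_gt1; rewrite -xS_eq cards1.
Qed.

End TupleSharingClosures.

Theorem proposition3p11 (VI : finType) (n k : nat) :
  #|VI| = n -> 1 <= k <= n ->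
  TS VI k \subset TSD VI k /\ (1 < n -> TS VI k \proper TSD VI k).
Proof.
move=> cardVI /andP[k_gt0 _].
split=> [|n_gt1]; first exact: TS_sub_TSD.
rewrite properE TS_sub_TSD //=; apply/subsetPn; exists [set setT].
- by rewrite set1_in_TSD // -card_gt0 cardsT cardVI ltnW.
- by rewrite set1_notin_TS // cardsT cardVI.
Qed.
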